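(* Let $G=(V,E)$ be a simple graph on $V=\{1,\dots,n\}$ with graph state $|G\rangle$, and let $$\Omega_g=\sum_{\mathbf b\in\{0,1\}^n}\bigotimes_{j=1}^n|\Phi_{c_j(\mathbf b)\,\mathbf b_j}\rangle\langle\Phi_{c_j(\mathbf b)\,\mathbf b_j}|_{O_jO_j'}$$ acting on $\mathcal H\otimes\mathcal H$, where the first copy consists of qubits $O_1,\dots,O_n$ and the second of $O_1',\dots,O_n'$. Then: (i) $\Omega_g$ is an orthogonal projector and $\mathbb F\Omega_g\mathbb F=\Omega_g$; (ii) for every $n$-qubit state $|\omega\rangle$, $\Omega_g(|G\rangle\otimes|\omega\rangle)=\langle G|\omega\rangle\,|G\rangle\otimes|G\rangle$ and $\Omega_g(|\omega\rangle\otimes|G\rangle)=\langle G|\omega\rangle\,|G\rangle\otimes|G\rangle$; in particular $\Omega_g(|G\rangle\otimes|G\rangle)=|G\rangle\otimes|G\rangle$; (iii) $\Omega_g$ is a symmetric two-copy strategy for $|G\rangle$ with $\Omega_g\mathbb P_\psi=0$ and $\Omega_g\mathbb P_s\mathbb P_\psi=0$ (where $|\psi\rangle=|G\rangle$), hence $\lambda_\star(\Omega_g)=\gamma_\star(\Omega_g)=\xi_\star(\Omega_g)=0$.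
   Context: $\mathcal H=(\mathbb C^2)^{\otimes n}$. The graph state is $|G\rangle=\prod_{\{u,v\}\in E}CZ_{uv}|+\rangle^{\otimes n}$. For $\mathbf b\in\{0,1\}^n$ (a ''graph code''), the parity code $c(\mathbf b)\in\{0,1\}^n$ is $c_u(\mathbf b)=\sum_{v:\{u,v\}\in E}\mathbf b_v \bmod 2$. For $z,x\in\{0,1\}$, $|\Phi_{zx}\rangle=(\mathbb I\otimes X^xZ^z)(|00\rangle+|11\rangle)/\sqrt2$. On $\mathcal H\otimes\mathcal H$ (two copies) let $\mathbb F$ be the swap operator $\mathbb F(|x\rangle\otimes|y\rangle)=|y\rangle\otimes|x\rangle$, $\mathbb I$ the identity, $\mathbb P_s=(\mathbb F+\mathbb I)/2$ and $\mathbb P_\psi=|\psi\rangle\langle\psi|\otimes(\mathbb I-|\psi\rangle\langle\psi|)$. A symmetric two-copy strategy for $|\psi\rangle$ is an operator $\Omega$ on $\mathcal H\otimes\mathcal H$ with $0\le\Omega\le\mathbb I$, $\Omega(|\psi\rangle\otimes|\psi\rangle)=|\psi\rangle\otimes|\psi\rangle$ and $\mathbb F\Omega\mathbb F=\Omega$. Define $\lambda_\star(\Omega)$ as the largest eigenvalue of the Hermitian operator $2\mathbb P_\psi\mathbb P_s\Omega\mathbb P_s\mathbb P_\psi$, $\gamma_\star(\Omega)$ as the largest eigenvalue of $\mathbb P_\psi\mathbb F\Omega\mathbb P_\psi$, and $\xi_\star(\Omega)$ as the largest eigenvalue of $\mathbb P_\psi(\tfrac12\mathbb F+\mathbb I)\Omega\mathbb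 P_\psi$. *)

From HB Require Import structures.
From mathcomp Require Import all_boot all_order all_algebra.
From mathcomp Require Import algC.
From mathcomp Require Export mxtens.
Set Implicit Arguments. Unset Strict Implicit. Unset Printing Implicit Defensive.
Import Order.TTheory GRing.Theory Num.Theory.
Local Open Scope ring_scope.

(* Tensor (Kronecker) product of matrices: mathcomp-real-closed's tensmx.
   Index convention: mxtens_index (i, j) = i * dim2 + j. *)
Notation "A *t B" := (tensmx A B) (at level 40, left associativity).

Definition dag {m n} (A : 'M[algC]_(m, n)) : 'M[algC]_(n, m) :=
  (map_mx Num.conj A)^T.

Definition psd {m} (A : 'M[algC]_m) : Prop :=
  dag A = A /\ forall v : 'cV[algC]_m, 0 <= (dag v *m A *m v) 0 0.

Definition orth_proj {m} (A : 'M[algC]_m) : Prop := A *m A = A /\ dag A = A.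

Definition braket {m} (u v : 'cV[algC]_m) : algC := (dag u *m v) 0 0.
Definition is_state {m} (u : 'cV[algC]_m) : Prop := braket u u = 1.

(* ---------------- n qubits ----------------
   The Hilbert space (C^2)^{(x) n} is 'cV_(2^n); qubit j (j : 'I_n) of the
   basis vector with index i : 'I_(2^n) is bit j of i. *)
Definition bit {n} (j : 'I_n) (i : 'I_(2 ^ n)) : bool := odd (i %/ 2 ^ j).

Definition plus_state n : 'cV[algC]_(2 ^ n) :=
  const_mx (sqrtC (2 ^ n)%:R)^-1.

Definition CZ {n} (u v : 'I_n) : 'M[algC]_(2 ^ n) :=
  diag_mx (\row_i (-1) ^+ (bit u i && bit v i)).

(* A simple graph on V = 'I_n (vertices 1..n relabeled 0..n-1):
   a symmetric irreflexive adjacency relation. *)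
Definition simple_graph {n} (adj : rel 'I_n) : Prop :=
  irreflexive adj /\ symmetric adj.

Definition edges {n} (adj : rel 'I_n) : seq ('I_n * 'I_n) :=
  [seq e : 'I_n * 'I_n <- [seq (u, v) | u <- enum 'I_n, v <- enum 'I_n] | (e.1 < e.2)%N && adj e.1 e.2].

Definition graph_state {n} (adj : rel 'I_n) : 'cV[algC]_(2 ^ n) :=
  foldr (fun e A => CZ e.1 e.2 *m A) 1%:M (edges adj) *m plus_state n.

Definition parity_code {n} (adj : rel 'I_n) (b : {ffun 'I_n -> bool})
  (u : 'I_n) : bool :=
  odd (\sum_(v | adj u v) (b v : nat)).

Definition ob (b : bool) : 'I_2 := inord (nat_of_bool b).
Definition PauliX : 'M[algC]_2 := \matrix_(i, j) ((i != j)%:R).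
Definition PauliZ : 'M[algC]_2 :=
  \matrix_(i, j) ((i == j)%:R * (-1) ^+ (nat_of_ord i)).

(* (|00> + |11>)/sqrt 2 on C^2 (x) C^2 *)
Definition bell : 'cV[algC]_(2 * 2) :=
  \col_k (((mxtens_unindex k).1 == (mxtens_unindex k).2)%:R / sqrtC 2).

Definition Phi (z x : bool) : 'cV[algC]_(2 * 2) :=
  (1%:M *t (PauliX ^+ x *m PauliZ ^+ z)) *m bell.

(* ---------------- two copies ----------------
   H (x) H = 'cV_(2^n * 2^n); the basis index mxtens_index (u, u') has
   first-copy index u (qubits O_1..O_n) and second-copy index u'
   (qubits O_1'..O_n'). *)
Definition copy1 {n} (k : 'I_(2 ^ n * 2 ^ n)) : 'I_(2 ^ n) := (mxtens_unindex k).1.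
Definition copy2 {n} (k : 'I_(2 ^ n * 2 ^ n)) : 'I_(2 ^ n) := (mxtens_unindex k).2.

Definition swapF n : 'M[algC]_(2 ^ n * 2 ^ n) :=
  \matrix_(k, l) ((copy1 k == copy2 l) && (copy2 k == copy1 l))%:R.

Definition Psym n : 'M[algC]_(2 ^ n * 2 ^ n) := 2^-1 *: (swapF n + 1%:M).

Definition Ppsi {n} (psi : 'cV[algC]_(2 ^ n)) : 'M[algC]_(2 ^ n * 2 ^ n) :=
  (psi *m dag psi) *t (1%:M - psi *m dag psi).

(* Omega_g = sum_b (x)_{j} |Phi_{c_j(b) b_j}><Phi_{c_j(b) b_j}|_{O_j O_j'},
   written out entrywise: the factor for the pair (O_j, O_j') reads bit j of
   the first-copy index and bit j of the second-copy index. *)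
Definition Omega_g {n} (adj : rel 'I_n) : 'M[algC]_(2 ^ n * 2 ^ n) :=
  \matrix_(k, l) \sum_(b : {ffun 'I_n -> bool})
     \prod_(j < n)
       (Phi (parity_code adj b j) (b j)
              (mxtens_index (ob (bit j (copy1 k)), ob (bit j (copy2 k)))) 0
        * Num.conj (Phi (parity_code adj b j) (b j)
              (mxtens_index (ob (bit j (copy1 l)), ob (bit j (copy2 l)))) 0)).

Definition sym_two_copy_strategy {n} (psi : 'cV[algC]_(2 ^ n))
  (Om : 'M[algC]_(2 ^ n * 2 ^ n)) : Prop :=
  [/\ psd Om, psd (1%:M - Om), Om *m (psi *t psi) = psi *t psi
    & swapF n *m Om *m swapF n = Om].

Definition largest_eigenvalue {m} (A : 'M[algC]_m) (l : algC) : Prop :=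
  eigenvalue A l /\ forall a, eigenvalue A a -> a <= l.

Definition lambda_star {n} (psi : 'cV[algC]_(2 ^ n)) (Om : 'M[algC]_(2 ^ n * 2 ^ n)) l :=
  largest_eigenvalue (2%:R *: (Ppsi psi *m Psym n *m Om *m Psym n *m Ppsi psi)) l.
Definition gamma_star {n} (psi : 'cV[algC]_(2 ^ n)) (Om : 'M[algC]_(2 ^ n * 2 ^ n)) l :=
  largest_eigenvalue (Ppsi psi *m swapF n *m Om *m Ppsi psi) l.
Definition xi_star {n} (psi : 'cV[algC]_(2 ^ n)) (Om : 'M[algC]_(2 ^ n * 2 ^ n)) l :=
  largest_eigenvalue
    (Ppsi psi *m (2^-1 *: swapF n + 1%:M) *m Om *m Ppsi psi) l.

(* The vectors v_b = (x)_j |Phi_(c_j(b) b_j)>, b in {0,1}^n, are tensor products of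
   Bell states, hence orthonormal, so Omega_g = sum_b |v_b><v_b| is an orthogonal
   projector.  The swap multiplies |Phi_zx> by (-1)^(zx), so each v_b is an
   eigenvector of F and F Omega_g F = Omega_g.
   The graph state has amplitudes 2^(-n/2) s(f) with s(f) = prod_(uv in E) (-1)^(f_u f_v),
   and this quadratic form satisfies s(f + b) = s(f) s(b) (-1)^(c(b).f).  As v_b has
   amplitude 2^(-n/2) (-1)^(c(b).f) exactly at the basis vectors |f>|f + b>, this gives
   <v_b|G (x) w> = 2^(-n/2) s(b) <G|w> and sum_b s(b) v_b = 2^(n/2) |G>|G>, whence
   Omega_g (G (x) w) = <G|w> G (x) G, and by swap symmetry the same for w (x) G.
   In particular Omega_g annihilates |G><G| (x) (1 - |G><G|), so the three operators
   defining lambda*, gamma* and xi* all vanish. *)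

From HB Require Import structures.
From mathcomp Require Import all_boot all_order all_algebra.
From mathcomp Require Import algC mxtens ring.
Set Implicit Arguments. Unset Strict Implicit. Unset Printing Implicit Defensive.
Import GRing.Theory Num.Theory.
Local Open Scope ring_scope.

Lemma bits_inj (n u v : nat) : (u < 2 ^ n)%N -> (v < 2 ^ n)%N ->
  (forall j, (j < n)%N -> odd (u %/ 2 ^ j) = odd (v %/ 2 ^ j)) -> u = v.
Proof.
elim: n u v => [|n IHn] u v.
  by rewrite expn0 !ltnS !leqn0 => /eqP-> /eqP->.
move=> ltu ltv eq_bits.
have eq_odd : odd u = odd v by have := eq_bits 0%N isT; rewrite expn0 !divn1.
have eq_half : (u %/ 2 = v %/ 2)%N.
  apply: IHn; rewrite ?ltn_divLR // -?expnSr // => j ltjn.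
  by rewrite -!divnMA -expnS; apply: eq_bits.
by rewrite (divn_eq u 2) (divn_eq v 2) eq_half !modn2 eq_odd.
Qed.

Definition bits_of {n} (u : 'I_(2 ^ n)) : {ffun 'I_n -> bool} := [ffun j => bit j u].

Lemma bits_of_bij n : bijective (@bits_of n).
Proof.
apply: inj_card_bij; last by rewrite card_ffun card_bool !card_ord.
move=> u v /ffunP eq_uv; apply: val_inj; apply: (@bits_inj n); rewrite ?ltn_ord // => j ltjn.
by have := eq_uv (Ordinal ltjn); rewrite !ffunE.
Qed.

Lemma reindex_bits_of n (F : {ffun 'I_n -> bool} -> algC) :
  \sum_(u : 'I_(2 ^ n)) F (bits_of u) = \sum_f F f.
Proof.
have [g bitsK bitsVK] := bits_of_bij n.
by rewrite (reindex bits_of) //; exists g => f _; [apply: bitsK | apply: bitsVK].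
Qed.

Lemma sum_prod_bits n (h : 'I_n -> bool -> algC) :
  \sum_(u : 'I_(2 ^ n)) \prod_(j < n) h j (bit j u) =
  \prod_(j < n) (h j false + h j true).
Proof.
transitivity (\sum_(u : 'I_(2 ^ n)) \prod_(j < n) h j (bits_of u j)).
  by apply: eq_bigr => u _; apply: eq_bigr => j _; rewrite ffunE.
rewrite (reindex_bits_of (fun f => \prod_(j < n) h j (f j))) -bigA_distr_bigA.
by apply: eq_bigr => j _; rewrite big_bool addrC.
Qed.

Lemma sum_mxtens_index m k (F : 'I_(m * k) -> algC) :
  \sum_x F x = \sum_(i < m) \sum_(j < k) F (mxtens_index (i, j)).
Proof.
rewrite pair_big (reindex (@mxtens_unindex m k)) /=.
  by apply: eq_bigr => x _; rewrite mxtens_unindexK.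
by exists (@mxtens_index m k) => i _; rewrite (mxtens_indexK, mxtens_unindexK).
Qed.

Lemma sum_delta (T : finType) (a : T) (P : pred T) (F : T -> algC) :
  P =1 pred1 a -> \sum_x (P x)%:R * F x = F a.
Proof.
move=> Pa; rewrite (bigD1 a) ?Pa //= eqxx mul1r big1 ?addr0 // => x /negbTE neq_xa.
by rewrite Pa /= neq_xa mul0r.
Qed.

Lemma prod_nat_bool (I : finType) (P : pred I) :
  \prod_j ((P j)%:R : algC) = [forall j, P j]%:R.
Proof.
have [/forallP allP | /forallPn [j notPj]] := boolP [forall j, P j].
  by apply: big1 => j _; rewrite allP.
by rewrite (bigD1 j) //= (negbTE notPj) mul0r.
Qed.

Lemma sign_sq (b : bool) : (-1) ^+ b * (-1) ^+ b = 1 :> algC.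
Proof. by rewrite -expr2 sqrr_sign. Qed.

Section Adjoint.

Variables m k p : nat.

Lemma dag_mul (A : 'M[algC]_(m, k)) (B : 'M[algC]_(k, p)) :
  dag (A *m B) = dag B *m dag A.
Proof.
apply/matrixP => i j; rewrite !mxE rmorph_sum; apply: eq_bigr => l _.
by rewrite !mxE rmorphM mulrC.
Qed.

Lemma dagK (A : 'M[algC]_(m, k)) : dag (dag A) = A.
Proof. by apply/matrixP => i j; rewrite !mxE conjCK. Qed.

Lemma dag_sum (I : finType) (F : I -> 'M[algC]_(m, k)) :
  dag (\sum_i F i) = \sum_i dag (F i).
Proof.
apply/matrixP => i j; rewrite !mxE !summxE rmorph_sum.
by apply: eq_bigr => l _; rewrite !mxE.
Qed.

Lemma dagB (A B : 'M[algC]_(m, k)) : dag (A - B) = dag A - dag B.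
Proof. by apply/matrixP => i j; rewrite !mxE rmorphB. Qed.

Lemma dag1 : dag (1%:M : 'M[algC]_m) = 1%:M.
Proof. by apply/matrixP => i j; rewrite !mxE rmorph_nat eq_sym. Qed.

End Adjoint.

Lemma tensmxZr m1 n1 m2 n2 (c : algC) (A : 'M[algC]_(m1, n1)) (B : 'M[algC]_(m2, n2)) :
  A *t (c *: B) = c *: (A *t B).
Proof. by apply/matrixP => i j; rewrite !mxE mulrCA. Qed.

Lemma orth_proj_psd m (A : 'M[algC]_m) : orth_proj A -> psd A.
Proof.
case=> AA_A dagA; split => // v.
have -> : dag v *m A *m v = dag (A *m v) *m (A *m v).
  by rewrite dag_mul dagA -{1}AA_A !mulmxA.
rewrite mxE; apply: sumr_ge0 => i _; rewrite !mxE mulrC.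
exact: mul_conjC_ge0.
Qed.

Lemma orth_projBl m (A : 'M[algC]_m) : orth_proj A -> orth_proj (1%:M - A).
Proof.
case=> AA_A dagA; split; last by rewrite dagB dag1 dagA.
by rewrite mulmxBl !mulmxBr !mul1mx mulmx1 AA_A subrr subr0.
Qed.

Lemma orth_proj_sum_outer m (I : finType) (v : I -> 'cV[algC]_m) :
  (forall i j, dag (v i) *m v j = ((i == j)%:R)%:M) ->
  orth_proj (\sum_i v i *m dag (v i)).
Proof.
move=> orthonormal; split; last first.
  by rewrite dag_sum; apply: eq_bigr => i _; rewrite dag_mul dagK.
have outer_mul i j : v i *m dag (v i) *m (v j *m dag (v j)) =
    (i == j)%:R *: (v i *m dag (v j)).
  by rewrite mulmxA -(mulmxA (v i)) orthonormal mul_mx_scalar scalemxAl.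
rewrite mulmx_suml; apply: eq_bigr => i _; rewrite mulmx_sumr (bigD1 i) //=.
rewrite outer_mul eqxx scale1r big1 ?addr0 // => j neq_ji.
by rewrite outer_mul eq_sym (negbTE neq_ji) scale0r.
Qed.

Lemma largest_eigenvalue0 m : (0 < m)%N -> largest_eigenvalue (0 : 'M[algC]_m) 0.
Proof.
move=> m_gt0; split=> [|a /eigenvalueP [v]].
  apply/eigenvalueP; exists (const_mx 1); first by rewrite mulmx0 scale0r.
  apply/eqP => /matrixP /(_ 0 (Ordinal m_gt0)); rewrite !mxE => /eqP.
  by rewrite oner_eq0.
by rewrite mulmx0 => /esym /eqP; rewrite scaler_eq0 => /orP [/eqP -> | ->].
Qed.

Definition bell_amp (z x a c : bool) : algC :=
  ((c == a (+) x)%:R * (-1) ^+ (z && a)) / sqrtC 2.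

Lemma PhiE z x a c : Phi z x (mxtens_index (ob a, ob c)) 0 = bell_amp z x a c.
Proof.
have -> : Phi z x (mxtens_index (ob a, ob c)) 0 =
    (PauliX ^+ x *m PauliZ ^+ z) (ob c) (ob a) / sqrtC 2.
  rewrite mxE sum_mxtens_index (bigD1 (ob a)) //= [X in _ + X]big1 => [|i neq_ia].
    rewrite addr0 (bigD1 (ob a)) //= [X in _ + X]big1 => [|j neq_ja].
      by rewrite addr0 tensmxE !mxE !mxtens_indexK eqxx !mul1r.
    by rewrite tensmxE !mxE !mxtens_indexK /= eq_sym (negbTE neq_ja) !mul0r mulr0.
  by apply: big1 => j _; rewrite tensmxE mxE eq_sym (negbTE neq_ia) !mul0r.
have obK b : nat_of_ord (ob b) = b by rewrite inordK //; case: b.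
have ob_eq b b' : (ob b == ob b') = (b == b').
  by rewrite -val_eqE /= !obK; case: b; case: b'.
have -> : PauliZ = diag_mx (\row_(i < 2) (-1) ^+ (nat_of_ord i)).
  by apply/matrixP => i j; rewrite !mxE; case: eqVneq => [->|_]; rewrite ?mul1r ?mul0r.
rewrite /bell_amp; congr (_ / _).
case: z; case: x; rewrite ?expr0 ?expr1 ?mulmx1 ?mul1mx ?mul_mx_diag !mxE ?ob_eq ?obK.
all: by case: a; case: c; rewrite /= ?mulr1 ?mul1r ?mul0r ?mulr0n ?mulr1n.
Qed.

Lemma sqrtC2_conj : (sqrtC 2 : algC)^* = sqrtC 2.
Proof. by rewrite geC0_conj // sqrtC_ge0 ler0n. Qed.

Lemma bell_amp_conj z x a c : (bell_amp z x a c)^* = bell_amp z x a c.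
Proof.
rewrite fmorph_div rmorphM rmorph_nat rmorphXn rmorphN1; congr (_ / _).
exact: sqrtC2_conj.
Qed.

Lemma bell_amp_orthonormal z x z' x' :
  \sum_(a : bool) \sum_(c : bool) bell_amp z x a c * bell_amp z' x' a c =
  ((z == z') && (x == x'))%:R.
Proof.
rewrite !big_bool /bell_amp !mulf_div -expr2 sqrtCK.
have two_neq0 : (2 : algC) != 0 by rewrite pnatr_eq0.
by case: z; case: z'; case: x; case: x'; rewrite /= ?expr0 ?expr1; field.
Qed.

Lemma bell_amp_swap z x a c : bell_amp z x c a = (-1) ^+ (z && x) * bell_amp z x a c.
Proof.
by case: z; case: x; case: a; case: c; rewrite /bell_amp /= ?expr0 ?expr1; ring.
Qed.

Section BellProducts.

Variables (n : nat) (adj : rel 'I_n).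

Definition bell_product (b : {ffun 'I_n -> bool}) : 'cV[algC]_(2 ^ n * 2 ^ n) :=
  \col_k \prod_(j < n)
    bell_amp (parity_code adj b j) (b j) (bit j (copy1 k)) (bit j (copy2 k)).

Definition parity_sign (b f : {ffun 'I_n -> bool}) : algC :=
  \prod_(j < n) (-1) ^+ (parity_code adj b j && f j).

Lemma parity_sign_sq b f : parity_sign b f * parity_sign b f = 1.
Proof. by rewrite -big_split; apply: big1 => j _; apply: sign_sq. Qed.

Lemma bell_product_conj b k i : (bell_product b k i)^* = bell_product b k i.
Proof. by rewrite !mxE rmorph_prod; apply: eq_bigr => j _; apply: bell_amp_conj. Qed.

Lemma Omega_g_entry k l :
  Omega_g adj k l = \sum_b bell_product b k 0 * bell_product b l 0.
Proof.
rewrite mxE; apply: eq_bigr => b _; rewrite !mxE -big_split /=.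
by apply: eq_bigr => j _; rewrite !PhiE bell_amp_conj.
Qed.

Lemma Omega_gE :
  Omega_g adj = \sum_b bell_product b *m dag (bell_product b).
Proof.
apply/matrixP => k l; rewrite Omega_g_entry summxE; apply: eq_bigr => b _.
by rewrite [RHS]mxE big_ord1 [dag _ _ _]mxE [map_mx _ _ _ _]mxE bell_product_conj.
Qed.

Lemma bell_product_orthonormal b b' :
  dag (bell_product b) *m bell_product b' = ((b == b')%:R)%:M.
Proof.
pose g j (a c : bool) := bell_amp (parity_code adj b j) (b j) a c *
                         bell_amp (parity_code adj b' j) (b' j) a c.
apply/matrixP => i i'; rewrite !ord1 [RHS]mxE eqxx mulr1n mxE sum_mxtens_index.
transitivity (\sum_(u1 < 2 ^ n) \sum_(u2 < 2 ^ n)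
                \prod_(j < n) g j (bit j u1) (bit j u2)).
  apply: eq_bigr => u1 _; apply: eq_bigr => u2 _.
  rewrite [dag _ _ _]mxE [map_mx _ _ _ _]mxE bell_product_conj !mxE -big_split /=.
  by apply: eq_bigr => j _; rewrite /copy1 /copy2 mxtens_indexK.
under eq_bigr do rewrite (sum_prod_bits (fun j => g j (bit j _))).
rewrite (sum_prod_bits (fun j a => g j a false + g j a true)).
under eq_bigr => j _.
  rewrite (_ : _ + _ = \sum_a \sum_c g j a c); last by rewrite !big_bool /=; ring.
  rewrite bell_amp_orthonormal; over.
rewrite prod_nat_bool; congr ((nat_of_bool _)%:R).
apply/forallP/eqP => [same | <- j]; last by rewrite !eqxx.
by apply/ffunP => j; have /andP [_ /eqP] := same j.
Qed.

Lemma Omega_g_orth_proj : orth_proj (Omega_g adj).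
Proof. by rewrite Omega_gE; apply: orth_proj_sum_outer; apply: bell_product_orthonormal. Qed.

End BellProducts.

Section Swap.

Variable n : nat.
Implicit Types (k l : 'I_(2 ^ n * 2 ^ n)) (u v : 'cV[algC]_(2 ^ n)).

Definition swap_index k : 'I_(2 ^ n * 2 ^ n) :=
  mxtens_index ((mxtens_unindex k).2, (mxtens_unindex k).1).

Lemma mxtens_unindex_swap k :
  mxtens_unindex (swap_index k) = ((mxtens_unindex k).2, (mxtens_unindex k).1).
Proof. exact: mxtens_indexK. Qed.

Lemma swap_indexK : involutive swap_index.
Proof.
move=> k; rewrite {1}/swap_index mxtens_unindex_swap -surjective_pairing.
exact: mxtens_unindexK.
Qed.

Lemma swapF_entry k l : swapF n k l = (l == swap_index k)%:R.
Proof.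
rewrite mxE -(inj_eq (can_inj (@mxtens_unindexK _ _))) mxtens_unindex_swap.
rewrite [mxtens_unindex l]surjective_pairing xpair_eqE /copy1 /copy2.
by rewrite andbC eq_sym [_.2 == _]eq_sym.
Qed.

Lemma swapF_mulmx p (A : 'M[algC]_(2 ^ n * 2 ^ n, p)) k (i : 'I_p) :
  (swapF n *m A) k i = A (swap_index k) i.
Proof.
rewrite mxE (eq_bigr (fun m => (m == swap_index k)%:R * A m i)) => [|m _].
  by rewrite (@sum_delta _ (swap_index k)).
by rewrite swapF_entry.
Qed.

Lemma mulmx_swapF p (A : 'M[algC]_(p, 2 ^ n * 2 ^ n)) (i : 'I_p) l :
  (A *m swapF n) i l = A i (swap_index l).
Proof.
rewrite mxE (eq_bigr (fun m => (m == swap_index l)%:R * A i m)) => [|m _].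
  by rewrite (@sum_delta _ (swap_index l)).
by rewrite swapF_entry -(inv_eq swap_indexK) eq_sym mulrC.
Qed.

Lemma swapF_swapF : swapF n *m swapF n = 1%:M.
Proof.
apply/matrixP => k l.
by rewrite swapF_mulmx swapF_entry swap_indexK mxE eq_sym.
Qed.

Lemma swapF_tens u v : swapF n *m (u *t v) = v *t u.
Proof.
apply/matrixP => k i; rewrite swapF_mulmx !mxE mxtens_unindex_swap /= mulrC.
by rewrite !ord1.
Qed.

End Swap.

Section SwapInvariance.

Variables (n : nat) (adj : rel 'I_n).

Lemma bell_product_swap b k i :
  bell_product adj b (swap_index k) i = parity_sign adj b b * bell_product adj b k i.
Proof.
rewrite !mxE /copy1 /copy2 mxtens_unindex_swap -big_split /=.
by apply: eq_bigr => j _; rewrite bell_amp_swap.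
Qed.

Lemma Omega_g_swap_index k l :
  Omega_g adj (swap_index k) (swap_index l) = Omega_g adj k l.
Proof.
rewrite !Omega_g_entry; apply: eq_bigr => b _; rewrite !bell_product_swap.
by rewrite mulrACA parity_sign_sq mul1r.
Qed.

Lemma swapF_Omega_g_swapF : swapF n *m Omega_g adj *m swapF n = Omega_g adj.
Proof. by apply/matrixP => k l; rewrite mulmx_swapF swapF_mulmx Omega_g_swap_index. Qed.

Lemma Omega_g_swapF : Omega_g adj *m swapF n = swapF n *m Omega_g adj.
Proof. by rewrite -{1}swapF_Omega_g_swapF -mulmxA swapF_swapF mulmx1. Qed.

End SwapInvariance.

Lemma prod_adj_edges n (adj : rel 'I_n) (F : 'I_n -> 'I_n -> algC) :
  simple_graph adj ->
  \prod_(u < n) \prod_(v < n | adj u v) F u v =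
  \prod_(e <- edges adj) (F e.1 e.2 * F e.2 e.1).
Proof.
case=> irr sym.
pose part (P : bool) u v := if P && adj u v then F u v else 1.
have split_adj u v :
    (if adj u v then F u v else 1) = part (u < v)%N u v * part (v < u)%N u v.
  rewrite /part; case: ltngtP => [_|_|/val_inj <-]; rewrite ?irr ?mulr1 ?mul1r //.
transitivity (\prod_(u < n) \prod_(v < n) (part (u < v)%N u v * part (v < u)%N u v)).
  by apply: eq_bigr => u _; rewrite big_mkcond; apply: eq_bigr => v _.
rewrite (eq_bigr (fun u : 'I_n => \prod_(v < n) part (u < v)%N u v *
                          \prod_(v < n) part (v < u)%N u v)) => [|u _]; last first.
  exact: big_split.
rewrite big_split /= [X in _ * X]exchange_big -big_split /=.
rewrite /edges big_filter [RHS]big_mkcond big_allpairs big_enum.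
apply: eq_bigr => u _; rewrite big_enum -big_split /=.
by apply: eq_bigr => v _; rewrite /part (sym v u); case: ifP; rewrite ?mulr1.
Qed.

Lemma sign_odd_sum n (P : pred 'I_n) (a : 'I_n -> bool) (x : bool) :
  (-1) ^+ (odd (\sum_(v | P v) (a v : nat)) && x) =
  \prod_(v | P v) (-1) ^+ (x && a v) :> algC.
Proof.
case: x; last by rewrite andbF expr0 big1.
by rewrite andbT signr_odd (big_morph _ (exprD (-1)) (expr0 (-1))).
Qed.

Section GraphState.

Variables (n : nat) (adj : rel 'I_n).
Hypothesis adj_simple : simple_graph adj.
Implicit Types (b f : {ffun 'I_n -> bool}).

Local Notation G := (graph_state adj).

Definition xorf f b : {ffun 'I_n -> bool} := [ffun j => f j (+) b j].

Definition edge_sign f : algC := \prod_(e <- edges adj) (-1) ^+ (f e.1 && f e.2).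

Definition amp : algC := (sqrtC 2)^-1 ^+ n.

Lemma xorfK b : cancel (xorf^~ b) (xorf^~ b).
Proof. by move=> f; apply/ffunP => j; rewrite !ffunE addbK. Qed.

Lemma xorKf f : cancel (xorf f) (xorf f).
Proof. by move=> b; apply/ffunP => j; rewrite !ffunE addKb. Qed.

Lemma edge_sign_sq f : edge_sign f * edge_sign f = 1.
Proof. by rewrite -big_split; apply: big1 => e _; apply: sign_sq. Qed.

Lemma edge_sign_conj f : (edge_sign f)^* = edge_sign f.
Proof. by rewrite rmorph_prod; apply: eq_bigr => e _; rewrite rmorphXn rmorphN1. Qed.

Lemma edge_sign_xor f b :
  edge_sign (xorf f b) = edge_sign f * edge_sign b *
    \prod_(e <- edges adj) ((-1) ^+ (f e.1 && b e.2) * (-1) ^+ (f e.2 && b e.1)).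
Proof.
rewrite -!big_split; apply: eq_bigr => e _; rewrite !ffunE.
by case: (f e.1); case: (f e.2); case: (b e.1); case: (b e.2);
  rewrite /= ?expr0 ?expr1; ring.
Qed.

Lemma parity_signE b f :
  parity_sign adj b f =
    \prod_(e <- edges adj) ((-1) ^+ (f e.1 && b e.2) * (-1) ^+ (f e.2 && b e.1)).
Proof.
rewrite -(@prod_adj_edges n adj (fun u v => (-1) ^+ (f u && b v)) adj_simple).
by apply: eq_bigr => u _; rewrite sign_odd_sum.
Qed.

(* The stabilizer relation X^b Z^(c(b)) |G> = +-|G>, read on amplitudes. *)
Lemma edge_sign_stabilizer b f :
  parity_sign adj b f * edge_sign f = edge_sign b * edge_sign (xorf f b).
Proof.
rewrite edge_sign_xor parity_signE -[LHS]mul1r -(edge_sign_sq b); ring.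
Qed.

Lemma amp_sq : amp * amp = ((2 ^ n)%:R)^-1.
Proof. by rewrite -exprMn -invfM -expr2 sqrtCK natrX exprVn. Qed.

Lemma inv_sqrt_pow2 : (sqrtC (2 ^ n)%:R)^-1 = amp.
Proof.
rewrite /amp exprVn natrX -[2%:R in LHS]sqrtCK -exprM mulnC exprM sqrCK //.
by rewrite exprn_ge0 ?sqrtC_ge0 ?ler0n.
Qed.

Lemma foldr_CZ (s : seq ('I_n * 'I_n)) :
  foldr (fun e A => CZ e.1 e.2 *m A) 1%:M s =
  diag_mx (\row_i \prod_(e <- s) (-1) ^+ (bit e.1 i && bit e.2 i)) :> 'M[algC]_(2 ^ n).
Proof.
elim: s => [|e s IHs] /=; first by apply/matrixP => i j; rewrite !mxE big_nil.
by rewrite IHs mulmx_diag; congr diag_mx; apply/rowP => i; rewrite !mxE big_cons.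
Qed.

Lemma graph_stateE u i : G u i = amp * edge_sign (bits_of u).
Proof.
rewrite /graph_state foldr_CZ mul_diag_mx !mxE inv_sqrt_pow2 mulrC.
by congr (_ * _); apply: eq_bigr => e _; rewrite !ffunE.
Qed.

Lemma graph_state_conj u i : (G u i)^* = G u i.
Proof.
rewrite graph_stateE rmorphM; congr (_ * _); last exact: edge_sign_conj.
by apply: geC0_conj; rewrite exprn_ge0 // invr_ge0 sqrtC_ge0 ler0n.
Qed.

Lemma graph_state_norm : dag G *m G = 1%:M.
Proof.
apply/matrixP => i j; rewrite !ord1 mxE [RHS]mxE eqxx mulr1n.
under eq_bigr do rewrite [dag _ _ _]mxE [map_mx _ _ _ _]mxE graph_state_conj
  graph_stateE mulrACA edge_sign_sq mulr1.
by rewrite sumr_const card_ord amp_sq -[_ *+ 2 ^ n]mulr_natr mulVf // pnatr_eq0 expn_eq0.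
Qed.

End GraphState.

Section GraphTensor.

Variables (n : nat) (adj : rel 'I_n).
Hypothesis adj_simple : simple_graph adj.

Local Notation G := (graph_state adj).
Local Notation v := (bell_product adj).
Local Notation sigma := (edge_sign adj).

Lemma bell_productE b k i :
  v b k i = (bits_of (copy2 k) == xorf (bits_of (copy1 k)) b)%:R *
            parity_sign adj b (bits_of (copy1 k)) * amp n.
Proof.
rewrite mxE /bell_amp !big_split /= prod_nat_bool prodr_const card_ord.
congr ((nat_of_bool _)%:R * _ * _); last by apply: eq_bigr => j _; rewrite ffunE.
apply/forallP/eqP => [bits_eq | /ffunP bits_eq j].
  by apply/ffunP => j; rewrite !ffunE; apply/eqP.
by have := bits_eq j; rewrite !ffunE => ->.
Qed.

Lemma bell_product_dot_graph_tensor b (w : 'I_(2 ^ n) -> algC) :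
  \sum_m v b m 0 * (G (copy1 m) 0 * w (copy2 m)) =
  amp n * amp n * sigma b * \sum_u sigma (bits_of u) * w u.
Proof.
rewrite sum_mxtens_index exchange_big mulr_sumr; apply: eq_bigr => u2 _ /=.
transitivity (\sum_u1 (bits_of u2 == xorf (bits_of u1) b)%:R *
   (parity_sign adj b (bits_of u1) * sigma (bits_of u1) * amp n * amp n * w u2)).
  apply: eq_bigr => u1 _; rewrite bell_productE graph_stateE /copy1 /copy2.
  by rewrite !mxtens_indexK /=; ring.
rewrite (reindex_bits_of (fun f => (bits_of u2 == xorf f b)%:R *
   (parity_sign adj b f * sigma f * amp n * amp n * w u2))).
rewrite (@sum_delta _ (xorf (bits_of u2) b)) => [|f]; last first.
  by apply/eqP/eqP => [-> | ->]; rewrite xorfK.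
by rewrite edge_sign_stabilizer // xorfK; ring.
Qed.

Lemma sum_bell_product_edge_sign k :
  \sum_b v b k 0 * sigma b = amp n * sigma (bits_of (copy1 k)) * sigma (bits_of (copy2 k)).
Proof.
set f1 := bits_of (copy1 k); set f2 := bits_of (copy2 k).
transitivity (\sum_b (f2 == xorf f1 b)%:R * (parity_sign adj b f1 * amp n * sigma b)).
  by apply: eq_bigr => b _; rewrite bell_productE !mulrA.
rewrite (@sum_delta _ (xorf f1 f2)) => [|b]; last first.
  by apply/eqP/eqP => [-> | ->]; rewrite xorKf.
have := edge_sign_stabilizer adj_simple (xorf f1 f2) f1; rewrite xorKf => stab.
rewrite -[LHS]mulr1 -(edge_sign_sq adj f1).
transitivity (amp n * sigma f1 *
  (parity_sign adj (xorf f1 f2) f1 * sigma f1 * sigma (xorf f1 f2))); first by ring.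
rewrite stab; transitivity (amp n * sigma f1 * sigma f2 *
  (sigma (xorf f1 f2) * sigma (xorf f1 f2))); first by ring.
by rewrite edge_sign_sq mulr1.
Qed.

Lemma Omega_g_graph_tensor_entry k (w : 'I_(2 ^ n) -> algC) :
  \sum_m Omega_g adj k m * (G (copy1 m) 0 * w (copy2 m)) =
  G (copy1 k) 0 * G (copy2 k) 0 * \sum_u (G u 0)^* * w u.
Proof.
transitivity (\sum_b v b k 0 * \sum_m v b m 0 * (G (copy1 m) 0 * w (copy2 m))).
  under eq_bigr do rewrite Omega_g_entry mulr_suml.
  rewrite exchange_big; apply: eq_bigr => b _; rewrite mulr_sumr.
  by apply: eq_bigr => m _; rewrite !mulrA.
under eq_bigr do rewrite bell_product_dot_graph_tensor.
have -> : \sum_u (G u 0)^* * w u = amp n * \sum_u sigma (bits_of u) * w u.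
  by rewrite mulr_sumr; apply: eq_bigr => u _; rewrite graph_state_conj graph_stateE mulrA.
transitivity (amp n * amp n * (\sum_u sigma (bits_of u) * w u) * \sum_b v b k 0 * sigma b).
  by rewrite mulr_sumr; apply: eq_bigr => b _; ring.
by rewrite sum_bell_product_edge_sign !graph_stateE; ring.
Qed.

Lemma Omega_g_graph_tensor p (W : 'M[algC]_(2 ^ n, p)) :
  Omega_g adj *m (G *t W) = G *t (G *m (dag G *m W)).
Proof.
apply/matrixP => k l; case: (mxtens_indexP l) => i {}l; rewrite (ord1 i).
rewrite mxE (eq_bigr (fun m => Omega_g adj k m *
    (G (copy1 m) 0 * (fun u => W u l) (copy2 m)))) => [|m _]; last first.
  by rewrite [(G *t W) _ _]mxE mxtens_indexK.
rewrite (Omega_g_graph_tensor_entry k (fun u => W u l)) [RHS]mxE mxtens_indexK /=.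
rewrite [(G *m _) _ _]mxE big_ord1 [(dag G *m W) _ _]mxE -mulrA.
by congr (_ * (_ * _)); apply: eq_bigr => u _; rewrite [dag G _ _]mxE [map_mx _ _ _ _]mxE.
Qed.

Lemma Omega_g_graph_tensor_col (w : 'cV[algC]_(2 ^ n)) :
  Omega_g adj *m (G *t w) = braket G w *: (G *t G).
Proof.
by rewrite Omega_g_graph_tensor [dag G *m w]mx11_scalar mul_mx_scalar tensmxZr.
Qed.

Lemma Omega_g_tensor_graph (w : 'cV[algC]_(2 ^ n)) :
  Omega_g adj *m (w *t G) = braket G w *: (G *t G).
Proof.
rewrite -swapF_tens mulmxA Omega_g_swapF -mulmxA Omega_g_graph_tensor_col.
by rewrite -scalemxAr swapF_tens.
Qed.

Lemma Omega_g_Ppsi : Omega_g adj *m Ppsi G = 0.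
Proof.
have -> : Ppsi G = (G *t (1%:M - G *m dag G)) *m (dag G *t 1%:M).
  by rewrite tensmx_mul mulmx1.
rewrite mulmxA Omega_g_graph_tensor mulmxBr mulmx1 mulmxA graph_state_norm.
by rewrite mul1mx subrr mulmx0 tensmx0 mul0mx.
Qed.

End GraphTensor.

Theorem mainTheorem6 (n : nat) (adj : rel 'I_n) (Hg : simple_graph adj) :
  let G := graph_state adj in
  let Om := Omega_g adj in
  (* (i) *)
  (orth_proj Om /\ swapF n *m Om *m swapF n = Om) /\
  (* (ii) *)
  ((forall omega : 'cV[algC]_(2 ^ n), is_state omega ->
      Om *m (G *t omega) = braket G omega *: (G *t G) /\
      Om *m (omega *t G) = braket G omega *: (G *t G)) /\
   Om *m (G *t G) = G *t G) /\
  (* (iii) *)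
  (sym_two_copy_strategy G Om /\
   Om *m Ppsi G = 0 /\ Om *m Psym n *m Ppsi G = 0 /\
   lambda_star G Om 0 /\ gamma_star G Om 0 /\ xi_star G Om 0).
Proof.
move=> G Om.
have Om_proj : orth_proj Om := Omega_g_orth_proj adj.
have Om_GG : Om *m (G *t G) = G *t G.
  by rewrite Omega_g_graph_tensor_col // /braket graph_state_norm mxE scale1r.
have Om_P : Om *m Ppsi G = 0 := Omega_g_Ppsi Hg.
have Om_sym_P : Om *m Psym n *m Ppsi G = 0.
  rewrite -scalemxAr -scalemxAl mulmxDr mulmx1 Omega_g_swapF mulmxDl -mulmxA.
  by rewrite Om_P mulmx0 addr0 scaler0.
have nz_dim : (0 < 2 ^ n * 2 ^ n)%N by rewrite muln_gt0 expn_gt0.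
split; first by split; last exact: swapF_Omega_g_swapF.
split.
  split=> // w _; split; [exact: Omega_g_graph_tensor_col | exact: Omega_g_tensor_graph].
split.
  split=> //; [exact: orth_proj_psd | exact/orth_proj_psd/orth_projBl |
               exact: swapF_Omega_g_swapF].
do 2 split=> //.
split.
  rewrite /lambda_star -!mulmxA [Om *m _]mulmxA Om_sym_P !mulmx0 scaler0.
  exact: largest_eigenvalue0.
by split; rewrite /gamma_star /xi_star -mulmxA Om_P mulmx0; exact: largest_eigenvalue0.
Qed.
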